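(* Let $X$ be a real linear space and $\phi\colon X\times X\to\mathbb{R}$ a biadditive functional such that $\phi(z_0,z_0)<0$ for some $z_0\in X$. Then there is no function $f\colon X\to\mathbb{R}$ satisfying $f(x+y)=f(x)f(y)-\phi(x,y)$ for all $x,y\in X$.
   Context: A map $\phi\colon X\times X\to\mathbb{R}$ is biadditive if it is additive in each variable separately (no homogeneity assumed). *)

From mathcomp Require Import all_boot all_order all_algebra.
From mathcomp Require Import Rstruct.
Set Implicit Arguments. Unset Strict Implicit. Unset Printing Implicit Defensive.
Import GRing.Theory.
Local Open Scope ring_scope.

Notation RR := Rdefinitions.R.

Definition biadditive (X : lmodType RR) (phi : X -> X -> RR) : Prop :=
  (forall x1 x2 y, phi (x1 + x2) y = phi x1 y + phi x2 y) /\
  (forall x y1 y2, phi x (y1 + y2) = phi x y1 + phi x y2).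

From mathcomp Require Import all_boot all_order all_algebra.
From mathcomp Require Import Rstruct.
From mathcomp Require Import ring.

Set Implicit Arguments.
Unset Strict Implicit.
Unset Printing Implicit Defensive.
Import Order.TTheory GRing.Theory Num.Theory.
Local Open Scope ring_scope.

(* Put a := phi z z and t := f z. The equation determines f (2z) and f (3z)
   as polynomials in t, and evaluating f (4z) both as f (2z + 2z) and as
   f (3z + z) forces a ((t - 1)^2 - a) = 0. Hence a = 0 or a = (t - 1)^2;
   either way a >= 0, so phi must be nonnegative on the diagonal. *)

Section DiagonalNonnegative.

Variables (R : realDomainType) (V : zmodType) (phi : V -> V -> R).
Hypothesis phiDl : forall x1 x2 y, phi (x1 + x2) y = phi x1 y + phi x2 y.
Hypothesis phiDr : forall x y1 y2, phi x (y1 + y2) = phi x y1 + phi x y2.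

Variable f : V -> R.
Hypothesis fD : forall x y, f (x + y) = f x * f y - phi x y.

Lemma phi_mulrnl (x y : V) (m : nat) : phi (x *+ m) y = phi x y *+ m.
Proof.
elim: m => [|m IHm].
  have /(congr1 (fun t => t - phi 0 y)) := phiDl 0 0 y.
  by rewrite addr0 subrr addrK !mulr0n.
by rewrite !mulrS phiDl IHm.
Qed.

Lemma phi_mulrnr (x y : V) (n : nat) : phi x (y *+ n) = phi x y *+ n.
Proof.
elim: n => [|n IHn].
  have /(congr1 (fun t => t - phi x 0)) := phiDr x 0 0.
  by rewrite addr0 subrr addrK !mulr0n.
by rewrite !mulrS phiDr IHn.
Qed.

Lemma f_mulrnS (z : V) (n : nat) :
  f (z *+ n.+2) = f (z *+ n.+1) * f z - phi z z *+ n.+1.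
Proof. by rewrite mulrSr fD phi_mulrnl. Qed.

Lemma phi_diag_mul_eq0 (z : V) :
  phi z z * ((f z - 1) ^+ 2 - phi z z) = 0.
Proof.
have f4_via_2 : f (z *+ 4) = f (z *+ 2) ^+ 2 - phi z z *+ 4.
  by rewrite -[4%N]/(2 + 2)%N mulrnDr fD phi_mulrnl phi_mulrnr -mulrnA.
move: f4_via_2; rewrite !f_mulrnS mulr1n => /eqP; rewrite -subr_eq0 => /eqP.
by apply: etrans; ring.
Qed.

Lemma phi_diag_ge0 (z : V) : 0 <= phi z z.
Proof.
have /eqP := phi_diag_mul_eq0 z; rewrite mulf_eq0 subr_eq0 => /orP[/eqP-> //|].
by move=> /eqP <-; exact: sqr_ge0.
Qed.

End DiagonalNonnegative.

Theorem corollary1 (X : lmodType RR) (phi : X -> X -> RR)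
  (hphi : biadditive phi) (z0 : X) (hz0 : phi z0 z0 < 0) :
  ~ exists f : X -> RR, forall x y : X, f (x + y) = f x * f y - phi x y.
Proof.
case: hphi => phiDl phiDr [f fD].
by move: hz0; rewrite ltNge (phi_diag_ge0 phiDl phiDr fD).
Qed.
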